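(* Let $A$ be a finite set of alternatives with $|A|\ge 3$ and let $\mathbb{D}$ be a domain of linear orders over $A$ that is connected with two distinct neighbours. Then $\mathbb{D}$ is connected and satisfies the disagreement property: for any alternatives $a,b$ such that $r_1(P_i)=a$ and $r_1(P_i')=b$ for some adjacent $P_i,P_i'\in\mathbb{D}$, there exist $\bar P_i,\hat P_i\in\mathbb{D}$ with $r_1(\bar P_i),r_1(\hat P_i)\notin\{a,b\}$, $a\,\bar P_i\,b$ and $b\,\hat P_i\,a$.
   Context: A domain is a set $\mathbb{D}$ of linear orders over $A$; $r_k(P_i)$ denotes the $k$-th ranked alternative of $P_i$, and $x\,P_i\,y$ means $P_i$ ranks $x$ above $y$. Two linear orders $P_i,P_i'$ are adjacent if $P_i'$ is obtained from $P_i$ by swapping two consecutively ranked alternatives, leaving all other ranks unchanged. A path in $\mathbb{D}$ is a sequence of distinct preferences in $\mathbb{D}$ with consecutive ones adjacent; $\mathbb{D}$ is connected if any two of its elements are joined by a path in $\mathbb{D}$. For $\bar{\mathbb{D}}\subseteq\mathbb{D}$, a neighbour of $\bar{\mathbb{D}}$ in $\mathbb{D}$ is a $P_i\in\mathbb{D}\setminus\bar{\mathbb{D}}$ adjacent to some element of $\bar{\mathbb{D}}$. $P_i,P_i'\in\mathbb{D}$ are top-connected if some path in $\mathbb{D}$ from $P_i$ to $P_i'$ has all members with the same top alternative; $\mathbb{D}^{TCC}(P_i)$ is the set of elements of $\mathbb{D}$ top-connected to $P_i$, together with $P_i$. $\mathbb{D}$ is connected with two distinct neighbours if it is connected and for every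 $P_i\in\mathbb{D}$ there exist neighbours $P_i',P_i''$ of $\mathbb{D}^{TCC}(P_i)$ in $\mathbb{D}$ with $r_1(P_i')\ne r_1(P_i'')$. *)

From mathcomp Require Import all_boot.
Set Implicit Arguments. Unset Strict Implicit. Unset Printing Implicit Defensive.

Section Prefs.
Variable A : finType.

(* A linear order over A is represented by its ranking list: the sequence
   r_1(P), r_2(P), ..., r_|A|(P), i.e. a permutation of all elements of A. *)
Definition linorder (P : seq A) : Prop := perm_eq P (enum A).

Definition top (P : seq A) : option A := ohead P.

Definition prefers (P : seq A) (x y : A) : Prop := index x P < index y P.

Definition adjacent (P Q : seq A) : Prop :=
  exists (l r : seq A) (x y : A), P = l ++ x :: y :: r /\ Q = l ++ y :: x :: r.

Fixpoint adj_chain (p : seq (seq A)) : Prop :=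
  match p with
  | x :: ((y :: _) as q) => adjacent x y /\ adj_chain q
  | _ => True
  end.

Definition dpath (D : seq A -> Prop) (P : seq A) (p : seq (seq A)) (Q : seq A)
  : Prop :=
  uniq (P :: p) /\ (forall R, R \in P :: p -> D R) /\ adj_chain (P :: p)
  /\ last P p = Q.

Definition connected (D : seq A -> Prop) : Prop :=
  forall P Q, D P -> D Q -> exists p, dpath D P p Q.

Definition top_connected (D : seq A -> Prop) (P Q : seq A) : Prop :=
  exists p, dpath D P p Q /\ (forall R, R \in P :: p -> top R = top P).

Definition TCC (D : seq A -> Prop) (P : seq A) : seq A -> Prop :=
  fun R => R = P \/ top_connected D P R.

Definition neighbour (D S : seq A -> Prop) (R : seq A) : Prop :=
  D R /\ ~ S R /\ exists R', S R' /\ adjacent R' R.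

Definition connected_two_neighbours (D : seq A -> Prop) : Prop :=
  connected D /\
  forall P, D P -> exists P' P'',
    neighbour D (TCC D P) P' /\ neighbour D (TCC D P) P'' /\ top P' <> top P''.

End Prefs.

(* The only swap of adjacent alternatives that changes the top is the swap of
   the first two.  Hence every neighbour of the top-connected component of a
   preference P with top a has the form y :: a :: r with y <> a: it ranks a
   second.  Of the two neighbours with distinct tops, at least one has its top
   outside {a, b}, and it ranks a above b.  Applying this to P (top a) and to
   the adjacent P' (top b) gives both required preferences. *)
From mathcomp Require Import all_boot.

Set Implicit Arguments.
Unset Strict Implicit.
Unset Printing Implicit Defensive.

Section TopConnected.
Variable A : finType.
Implicit Types (P Q R : seq A) (p : seq (seq A)).

Lemma adj_chain_catl (s1 s2 : seq (seq A)) : adj_chain (s1 ++ s2) -> adj_chain s1.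
Proof.
elim: s1 => [|x [|y s1] IH] //= [adj_xy chain].
by split => //; apply: IH.
Qed.

Lemma adj_chain_rcons P p R :
  adj_chain (P :: p) -> adjacent (last P p) R -> adj_chain (P :: rcons p R).
Proof.
elim: p P => [|y p IH] P //= [adj_Py chain] adj_R.
by split => //; apply: IH.
Qed.

Variable D : seq A -> Prop.

Lemma dpath_rcons P p Q R :
  dpath D P p Q -> R \notin P :: p -> D R -> adjacent Q R ->
  dpath D P (rcons p R) R.
Proof.
move=> [uniq_p [D_p [chain last_p]]] R_new DR adj_QR.
rewrite /dpath -rcons_cons rcons_uniq R_new uniq_p last_rcons.
split=> //; split; last by split=> //; apply: adj_chain_rcons; rewrite ?last_p.
by move=> S; rewrite mem_rcons inE => /predU1P [->|/D_p].
Qed.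

Lemma dpath_prefix P p1 R p2 Q :
  dpath D P (p1 ++ R :: p2) Q -> dpath D P (rcons p1 R) R.
Proof.
rewrite /dpath -cat_rcons -cat_cons cat_uniq => -[/andP [uniq_p1 _] [D_p [chain _]]].
split=> //; split; first by move=> S S_p1; apply: D_p; rewrite mem_cat S_p1.
by split; [apply: adj_chain_catl chain | rewrite last_rcons].
Qed.

Lemma top_connected_refl P : D P -> top_connected D P P.
Proof. by move=> DP; exists [::]; do ![split=> //] => S; rewrite inE => /eqP ->. Qed.

Lemma top_connected_top P Q : top_connected D P Q -> top Q = top P.
Proof. by case=> p [[_ [_ [_ <-]]] top_p]; apply: top_p; apply: mem_last. Qed.

(* Paths must be repetition-free: if R already lies on the path, cut it at R. *)
Lemma top_connected_adjacent P Q R :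
  top_connected D P Q -> D R -> adjacent Q R -> top R = top P ->
  top_connected D P R.
Proof.
move=> [p [path_p top_p]] DR adj_QR top_R.
have [R_on|R_new] := boolP (R \in P :: p); last first.
  exists (rcons p R); split; first exact: dpath_rcons path_p R_new DR adj_QR.
  by move=> S; rewrite -rcons_cons mem_rcons inE => /predU1P [->|/top_p].
move: R_on; rewrite inE => /predU1P [->|R_p].
  by apply: top_connected_refl; case: path_p => _ [D_p _]; apply: D_p; apply: mem_head.
move: path_p top_p; case/splitPr: R_p => p1 p2 path_p top_p.
exists (rcons p1 R); split; first exact: dpath_prefix path_p.
by move=> S S_p1; apply: top_p; rewrite -cat_rcons -cat_cons mem_cat S_p1.
Qed.

Lemma TCC_top_connected P Q : D P -> TCC D P Q -> top_connected D P Q.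
Proof. by move=> DP [->|//]; apply: top_connected_refl. Qed.

Lemma adjacent_top_neq Q R :
  adjacent Q R -> top R <> top Q -> exists x y r, Q = x :: y :: r /\ R = y :: x :: r.
Proof. by case=> [[|z l] [r [x [y [-> ->]]]]] // _; exists x, y, r. Qed.

Lemma neighbour_TCC_second P a R :
  D P -> top P = Some a -> neighbour D (TCC D P) R ->
  exists y r, y <> a /\ R = y :: a :: r.
Proof.
move=> DP top_P [DR [R_out [Q [TCC_Q adj_QR]]]].
have tc_Q := TCC_top_connected DP TCC_Q.
have top_R : top R <> top Q.
  rewrite (top_connected_top tc_Q) => top_RP.
  by apply: R_out; right; apply: top_connected_adjacent adj_QR top_RP.
have [x [y [r [EQ ER]]]] := adjacent_top_neq adj_QR top_R.
move: top_R (top_connected_top tc_Q); rewrite EQ ER top_P => /= yx [xa].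
by exists y, r; rewrite -xa; split=> // yx'; apply: yx; rewrite yx'.
Qed.

Lemma prefers_second (y a b : A) r :
  y <> a -> y <> b -> a <> b -> prefers (y :: a :: r) a b.
Proof.
move=> /eqP/negbTE ya /eqP/negbTE yb /eqP/negbTE ab.
by rewrite /prefers /= ya yb eqxx ab.
Qed.

Lemma two_neighbours_disagree P a b :
  connected_two_neighbours D -> D P -> top P = Some a -> a <> b ->
  exists R, D R /\ top R <> Some a /\ top R <> Some b /\ prefers R a b.
Proof.
move=> [_ two_nb] DP top_P ab.
have [R1 [R2 [N1 [N2 top_12]]]] := two_nb P DP.
have [R [NR top_Rb]] : exists R, neighbour D (TCC D P) R /\ top R <> Some b.
  have [top_1b|top_1b] := eqVneq (top R1) (Some b); last by exists R1; split=> //; apply/eqP.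
  by exists R2; split=> // top_2b; apply: top_12; rewrite top_1b top_2b.
have [y [r [ya ER]]] := neighbour_TCC_second DP top_P NR.
have yb : y <> b by move=> yb; apply: top_Rb; rewrite ER yb.
exists (y :: a :: r); split; first by rewrite -ER; case: NR.
by do !split; [case | case | apply: prefers_second].
Qed.

End TopConnected.

Theorem mainTheorem6 (A : finType) (D : seq A -> Prop) :
  3 <= #|A| ->
  (forall P, D P -> linorder P) ->
  connected_two_neighbours D ->
  connected D /\
  (forall (a b : A) (P P' : seq A),
     D P -> D P' -> adjacent P P' -> top P = Some a -> top P' = Some b ->
     a <> b ->
     exists Pb Ph : seq A,
       D Pb /\ D Ph /\
       top Pb <> Some a /\ top Pb <> Some b /\
       top Ph <> Some a /\ top Ph <> Some b /\
       prefers Pb a b /\ prefers Ph b a).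
Proof.
move=> _ _ two_nb; split; first by case: two_nb.
move=> a b P P' DP DP' _ top_P top_P' ab.
have [Pb [DPb [Pb_a [Pb_b Pb_ab]]]] := two_neighbours_disagree two_nb DP top_P ab.
have ba : b <> a by move=> /esym.
have [Ph [DPh [Ph_b [Ph_a Ph_ba]]]] := two_neighbours_disagree two_nb DP' top_P' ba.
by exists Pb, Ph.
Qed.
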